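(* Let $A\in\mathbb{R}^{m\times N}$ and $K,S\subset[N]$. Suppose $\mathbb{1}_K$ is the unique solution of $$\min\|x\|_1\ \text{subject to}\ Ax=b,\ x\in[0,1]^N \qquad (P_{\mathrm{bin}})$$ with $b=A\mathbb{1}_K$, and $\mathbb{1}_S$ is the unique solution of $(P_{\mathrm{bin}})$ with $b=A\mathbb{1}_S$. Then $\ker(A)\cap H_K\cap H_{S^c}=\{0\}$.
   Context: $[N]=\{1,\dots,N\}$; $\mathbb{1}_K\in\{0,1\}^N$ denotes the indicator vector of $K$, and $S^c=[N]\setminus S$. For $K\subset[N]$, $H_K=\{w\in\mathbb{R}^N: w_i\le 0 \text{ for } i\in K,\ w_i\ge 0 \text{ for } i\notin K\}$. *)

From mathcomp Require Import all_boot all_order all_algebra.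
From mathcomp Require Import reals.
Set Implicit Arguments. Unset Strict Implicit. Unset Printing Implicit Defensive.
Import Order.TTheory GRing.Theory Num.Theory.
Local Open Scope ring_scope.

Definition indic {R : realType} {N : nat} (K : {set 'I_N}) : 'cV[R]_N :=
  \col_i (if i \in K then 1 else 0).

Definition l1norm {R : realType} {N : nat} (x : 'cV[R]_N) : R :=
  \sum_i `|x i 0|.

Definition feasible_bin {R : realType} {m N : nat} (A : 'M[R]_(m, N))
  (b : 'cV[R]_m) (x : 'cV[R]_N) : Prop :=
  A *m x = b /\ (forall i, 0 <= x i 0 <= 1).

Definition unique_sol_Pbin {R : realType} {m N : nat} (A : 'M[R]_(m, N))
  (b : 'cV[R]_m) (x : 'cV[R]_N) : Prop :=
  feasible_bin A b x /\
  (forall z, feasible_bin A b z -> z <> x -> l1norm x < l1norm z).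

Definition H_ {R : realType} {N : nat} (K : {set 'I_N}) : {pred 'cV[R]_N} :=
  fun w => [forall i, if i \in K then w i 0 <= 0 else 0 <= w i 0].

From mathcomp Require Import all_boot all_order all_algebra.
From mathcomp Require Import reals.
From mathcomp Require Import lra.
Set Implicit Arguments. Unset Strict Implicit. Unset Printing Implicit Defensive.
Import Order.TTheory GRing.Theory Num.Theory.
Local Open Scope ring_scope.

(* If [1_K] is the unique solution and [d] is a nonzero kernel vector in [H_K],
   then [1_K + t d] is feasible for small [t > 0] and differs from [1_K]; on the
   cube the l1 norm is the sum of the entries, so strict minimality of [1_K]
   forces [sum_i d_i > 0].  Applied to [w] with [K] and to [-w] with [S] (note
   [w \in H_(S^c)] iff [-w \in H_S]) this gives [sum_i w_i > 0 > sum_i w_i]. *)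

Section L1Cube.

Variables (R : realType) (N : nat).
Implicit Types (x d : 'cV[R]_N) (K : {set 'I_N}).

Lemma l1norm_nneg x : (forall i, 0 <= x i 0) -> l1norm x = \sum_i x i 0.
Proof. by move=> x_ge0; apply: eq_bigr => i _; rewrite ger0_norm. Qed.

Lemma ler_norm_l1norm x i : `|x i 0| <= l1norm x.
Proof. by rewrite /l1norm (bigD1 i) //= lerDl sumr_ge0. Qed.

Lemma indic_ge0_le1 K i : 0 <= (indic K : 'cV[R]_N) i 0 <= 1.
Proof. by rewrite mxE; case: (i \in K); rewrite ?lexx ?ler01. Qed.

Lemma H_setC K x : (x \in H_ (~: K)) = (- x \in H_ K).
Proof.
apply: eq_forallb => i; rewrite in_setC mxE.
by case: (i \in K); rewrite /= ?oppr_le0 ?oppr_ge0.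
Qed.

Lemma H_scale K t d : 0 < t -> d \in H_ K -> t *: d \in H_ K.
Proof.
move=> t_gt0 /forallP dH; apply/forallP => i; have := dH i; rewrite mxE.
by case: (i \in K); rewrite ?pmulr_rle0 ?pmulr_rge0.
Qed.

Lemma indicD_H_ge0_le1 K d :
  d \in H_ K -> (forall i, `|d i 0| <= 1) ->
  forall i, 0 <= (indic K + d) i 0 <= 1.
Proof.
move=> /forallP dH d_le1 i; rewrite !mxE.
have := d_le1 i; have := dH i.
case: (i \in K) => [d_le0|d_ge0].
- by rewrite ler0_norm // => ?; apply/andP; split; lra.
- by rewrite ger0_norm // => ?; apply/andP; split; lra.
Qed.

End L1Cube.

Lemma unique_sol_Pbin_ker_H_sum_gt0 (R : realType) (m N : nat)
  (A : 'M[R]_(m, N)) (K : {set 'I_N}) (d : 'cV[R]_N) :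
  unique_sol_Pbin A (A *m indic K) (indic K) ->
  A *m d = 0 -> d \in H_ K -> d != 0 -> 0 < \sum_i d i 0.
Proof.
move=> [_ minK] Ad0 dH d_neq0.
have s_gt0 : 0 < 1 + l1norm d by rewrite ltr_pwDl // sumr_ge0.
set t := (1 + l1norm d)^-1.
have t_gt0 : 0 < t by rewrite invr_gt0.
have td_le1 i : `|(t *: d) i 0| <= 1.
  rewrite mxE normrM gtr0_norm // mulrC ler_pdivrMr // mul1r.
  by rewrite (le_trans (ler_norm_l1norm d i)) // lerDr.
have cube := indicD_H_ge0_le1 (H_scale t_gt0 dH) td_le1.
have feas : feasible_bin A (A *m indic K) (indic K + t *: d).
  by split; rewrite // mulmxDr -scalemxAr Ad0 scaler0 addr0.
have neq : indic K + t *: d <> indic K.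
  rewrite -[X in _ <> X]addr0 => /addrI /eqP.
  by rewrite scaler_eq0 (negPf d_neq0) orbF gt_eqF.
have := minK _ feas neq.
rewrite !l1norm_nneg => [|i|i]; last first.
- by case/andP: (indic_ge0_le1 R K i).
- by case/andP: (cube i).
under [X in _ < X]eq_bigr do rewrite mxE [(t *: d) _ _]mxE.
by rewrite big_split -mulr_sumr /= ltrDl pmulr_rgt0.
Qed.

Theorem theorem2p2 (R : realType) (m N : nat) (A : 'M[R]_(m, N))
  (K S : {set 'I_N}) :
  unique_sol_Pbin A (A *m indic K) (indic K) ->
  unique_sol_Pbin A (A *m indic S) (indic S) ->
  forall w : 'cV[R]_N,
    A *m w = 0 -> w \in H_ K -> w \in H_ (~: S) -> w = 0.
Proof.
move=> solK solS w Aw0 wK wS; apply/eqP/negPn/negP => w_neq0.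
have sum_gt0 := unique_sol_Pbin_ker_H_sum_gt0 solK Aw0 wK w_neq0.
have : 0 < \sum_i (- w) i 0.
  apply: (unique_sol_Pbin_ker_H_sum_gt0 solS).
  - by rewrite mulmxN Aw0 oppr0.
  - by rewrite -H_setC.
  - by rewrite oppr_eq0.
under eq_bigr do rewrite mxE.
by rewrite sumrN oppr_gt0 ltNge ltW.
Qed.
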